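(* Let $k\ge2$ be even, $\alpha_1,\dots,\alpha_k$ positive integers, and $G=C(\alpha_1,\dots,\alpha_k)$. Then the clique number of $G$ is $$\omega(G)=\max_{1\le i\le k/2}\Big\{\alpha_{2i-1}+\Big(\frac{k}{2}-i+1\Big)\Big\}.$$
   Context: $C(\alpha_1,\dots,\alpha_k)$ is defined recursively by $C(\alpha_1)=\overline{K_{\alpha_1}}$ (edgeless graph) and $C(\alpha_1,\dots,\alpha_i)=\overline{C(\alpha_1,\dots,\alpha_{i-1})\cup K_{\alpha_i}}$ for $i=2,\dots,k$ (disjoint union, then complement). Equivalently for $k$ even, with $\pi_i$ the $\alpha_i$ vertices introduced at step $i$: $\pi_i$ is a clique for $i$ odd, independent for $i$ even, and for $i<j$ vertices of $\pi_i,\pi_j$ are adjacent iff $j$ is even. $\omega(G)$ is the maximum size of a clique in $G$. *)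

From mathcomp Require Import all_boot.
Set Implicit Arguments. Unset Strict Implicit. Unset Printing Implicit Defensive.

(* Levels (steps) are 0-indexed: level p corresponds to the paper's pi_{p+1}.
   cadj s p q = adjacency, in C(alpha_1,...,alpha_{s+1}), between two DISTINCT
   vertices introduced at steps p and q (p, q <= s), following the recursive
   definition: C(alpha_1) is edgeless; C(..., alpha_{s+1}) is the complement of
   (C(...,alpha_s) disjoint-union K_{alpha_{s+1}}). *)
Fixpoint cadj (s p q : nat) : bool :=
  match s with
  | 0 => false
  | s'.+1 =>
      if (p == s) && (q == s) then false          (* inside K_alpha, complemented *)
      else if (p == s) || (q == s) then true      (* no edge in union, complemented *)
      else ~~ cadj s' p q                         (* old edge, complemented *)
  end.

Definition cvert (k : nat) (a : nat -> nat) : finType := {i : 'I_k & 'I_(a i)}.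

Definition cgraph_adj (k : nat) (a : nat -> nat) (u v : cvert k a) : bool :=
  (u != v) && cadj k.-1 (val (tag u)) (val (tag v)).

Definition is_clique (T : finType) (e : rel T) (S : {set T}) : bool :=
  [forall u in S, forall v in S, (u != v) ==> e u v].

Definition clique_number (T : finType) (e : rel T) : nat :=
  \max_(S : {set T} | is_clique e S) #|S|.

From mathcomp Require Import all_boot zify.

(* Clique number of C(a_0, ..., a_(k-1)) for k even (levels are 0-indexed, so
   the paper's odd steps pi_(2i-1) are the even levels 2i here).

   Unfolding the recursive complementation gives a closed form for adjacency
   ([cadjE]): for k even, two distinct vertices on the same level t are
   adjacent iff t is even, and vertices on different levels are adjacent iff
   the larger level is odd ([cgraph_adjE]).  Hence in a clique S whose lowest
   level is m, every vertex off level m sits on an odd level above m, with at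
   most one vertex per odd level.  Counting the odd levels above m
   ([card_odd_above]) bounds #|S| by a m + #|odd levels above m| when m is even,
   and by the number of all odd levels when m is odd ([clique_card_le]).
   Conversely, for an even level t, the whole level t together with one vertex
   on each odd level above t is a clique attaining that bound
   ([witness_clique], [card_witness]). *)

Lemma cadjE s p q : p <= s -> q <= s ->
  cadj s p q = if p == q then odd (s - p) else ~~ odd (s - maxn p q).
Proof.
elim: s p q => [|s IH] p q hp hq /=.
  have -> : p = 0 by lia. by have -> : q = 0 by lia.
case: (eqVneq p s.+1) => [->|hps]; case: (eqVneq q s.+1) => [->|hqs] /=.
- by rewrite subnn.
- have -> : maxn s.+1 q = s.+1 by lia.
  by rewrite subnn; case: (s.+1 =P q) => //; lia.
- have -> : maxn p s.+1 = s.+1 by lia.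
  by rewrite subnn; case: (p =P s.+1) => //; lia.
- by rewrite IH; try lia; case: ifP => _; rewrite subSn ?oddS //; lia.
Qed.

Lemma cliqueP {T : finType} {e : rel T} {S : {set T}} {u v : T} :
  is_clique e S -> u \in S -> v \in S -> u != v -> e u v.
Proof.
by move=> /forallP /(_ u) /implyP hS hu hv huv; move/forallP: (hS hu) => /(_ v);
  rewrite hv huv.
Qed.

Lemma card_le_inj {T U : finType} (f : T -> U) (A : {set T}) (B : {set U}) :
  {in A &, injective f} -> {in A, forall x, f x \in B} -> #|A| <= #|B|.
Proof.
move=> finj fB; rewrite -(card_in_imset finj); apply: subset_leq_card.
by apply/subsetP => _ /imsetP [x hx ->]; apply: fB.
Qed.

Lemma even_halfK n : ~~ odd n -> n./2.*2 = n.
Proof. by move=> hev; rewrite halfK (negbTE hev) subn0. Qed.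

Definition odd_above (n m : nat) : {set 'I_n} := [set t : 'I_n | (m < t) && odd t].

Lemma card_odd_above n m : #|odd_above n m| = n./2 - m.+1./2.
Proof.
rewrite -sum1dep_card big_mkcond /=.
elim: n => [|n IH]; first by rewrite big_ord0.
rewrite big_ord_recr /= IH.
have h1 := odd_double_half n; have h2 := odd_double_half n.+1.
have h3 := odd_double_half m.+1; rewrite /= in h2.
by case: (ltnP m n) => hmn /=; case: (odd n) h1 h2 => /= h1 h2; lia.
Qed.

Section CliqueNumber.

Variables (k : nat) (a : nat -> nat).
(* k is even and positive (k - 1 is odd). *)
Hypothesis k_even : odd k.-1.

Local Notation V := (cvert k a).
Local Notation adj := (@cgraph_adj k a).
Local Notation M := (\max_(i < k./2) (a i.*2 + (k./2 - i))).

Lemma cgraph_adjE (u v : V) : adj u v = (u != v) &&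
  (if tag u == tag v then ~~ odd (tag u) else odd (maxn (tag u) (tag v))).
Proof.
have hu : tag u <= k.-1 by move: (ltn_ord (tag u)); lia.
have hv : tag v <= k.-1 by move: (ltn_ord (tag v)); lia.
have hmax : maxn (tag u) (tag v) <= k.-1 by lia.
by rewrite /cgraph_adj cadjE // (oddB hu) (oddB hmax) k_even negbK.
Qed.

Definition level (t : 'I_k) : {set V} := [set u | tag u == t].

Lemma card_level t : #|level t| = a t.
Proof.
have -> : level t = [set Tagged (fun i : 'I_k => 'I_(a i)) j | j : 'I_(a t)].
  apply/setP => -[t' j]; rewrite inE; apply/eqP/imsetP => [/= ht|[j' _ ->] //].
  by subst t'; exists j.
by rewrite card_in_imset ?card_ord // => j1 j2 _ _; apply: eq_from_Tagged.
Qed.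

Section Clique.

Variable S : {set V}.
Hypothesis S_clique : is_clique adj S.

(* Odd levels are independent sets, so a clique meets each of them at most once. *)
Lemma clique_odd_level_inj {u v : V} : u \in S -> v \in S ->
  tag u = tag v -> odd (tag u) -> u = v.
Proof.
move=> hu hv huv ho; apply/eqP; apply: contraT => hne.
by have := cliqueP S_clique hu hv hne; rewrite cgraph_adjE hne huv eqxx /= -huv ho.
Qed.

Lemma clique_above_min {w u : V} : w \in S -> (forall x, x \in S -> tag w <= tag x) ->
  u \in S -> tag u != tag w -> tag w < tag u /\ odd (tag u).
Proof.
move=> hw hmin hu hne.
have hlt : tag w < tag u by rewrite ltn_neqAle hmin // andbT eq_sym.
have hwu : w != u by apply: contra hne => /eqP <-.
split=> //; have := cliqueP S_clique hw hu hwu.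
by rewrite cgraph_adjE hwu eq_sym (negbTE hne) /= (maxn_idPr (ltnW hlt)).
Qed.

(* If the lowest level m of the clique is even, S has at most a_m vertices on
   level m and at most one on each odd level above m. *)
Lemma clique_card_even_min {w : V} : w \in S -> (forall x, x \in S -> tag w <= tag x) ->
  #|S| <= a (tag w) + #|odd_above k (tag w)|.
Proof.
move=> hw hmin; rewrite -(cardsID (level (tag w)) S) -card_level.
apply: leq_add; first by apply: subset_leq_card; apply: subsetIr.
apply: (card_le_inj (fun u : V => tag u)).
- move=> u v; rewrite !inE => /andP [hu1 hu2] /andP [hv1 hv2] heq.
  by apply: clique_odd_level_inj => //; case: (clique_above_min hw hmin hu2 hu1).
- move=> u; rewrite !inE => /andP [hu1 hu2].
  by case: (clique_above_min hw hmin hu2 hu1) => -> ->.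
Qed.

(* If the lowest level is odd, all levels of S are odd and distinct. *)
Lemma clique_card_odd_min {w : V} : w \in S -> (forall x, x \in S -> tag w <= tag x) ->
  odd (tag w) -> #|S| <= #|odd_above k 0|.
Proof.
move=> hw hmin hodd.
have allodd u : u \in S -> odd (tag u).
  move=> hu; case: (eqVneq (tag u) (tag w)) => [-> //|hne].
  by case: (clique_above_min hw hmin hu hne).
apply: (card_le_inj (fun u : V => tag u)).
- by move=> u v hu hv heq; apply: clique_odd_level_inj => //; apply: allodd.
- by move=> u hu; rewrite inE allodd // andbT lt0n; apply: contraTneq (allodd u hu) => ->.
Qed.

End Clique.

Lemma term_le_max (t : 'I_k) : ~~ odd t -> a t + #|odd_above k t| <= M.
Proof.
move=> hev; have k_ev : ~~ odd k by move: k_even; case: (k) => //= k'; rewrite negbK.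
have hi : t./2 < k./2 by rewrite -ltn_double !even_halfK.
apply: leq_trans (leq_bigmax (Ordinal hi)).
by rewrite /= even_halfK // card_odd_above /= uphalf_half (negbTE hev).
Qed.

Lemma clique_card_le S : is_clique adj S -> #|S| <= M.
Proof.
move=> hS; case: (set_0Vmem S) => [->|[w0 hw0]]; first by rewrite cards0.
case: (arg_minnP (fun u : V => val (tag u)) hw0) => w hw hmin.
have [hodd|hev] := boolP (odd (tag w)); last first.
  exact: leq_trans (clique_card_even_min S hS hw hmin) (term_le_max _ hev).
have k_pos : 0 < k by case: (k) k_even.
apply: leq_trans (clique_card_odd_min S hS hw hmin hodd) _.
exact: leq_trans (leq_addl (a 0) _) (term_le_max (Ordinal k_pos) isT).
Qed.

Hypothesis a_pos : forall i, i < k -> 0 < a i.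

Definition level_rep (t : 'I_k) : V :=
  Tagged (fun i : 'I_k => 'I_(a i)) (Ordinal (a_pos t (ltn_ord t))).

Definition witness (t : 'I_k) : {set V} := level t :|: level_rep @: odd_above k t.

Lemma witnessP (t : 'I_k) (u : V) : u \in witness t ->
  tag u = t \/ [/\ u = level_rep (tag u), t < tag u & odd (tag u)].
Proof.
rewrite !inE => /orP [/eqP -> | /imsetP [t' ht' ->]]; first by left.
by right; rewrite inE in ht'; case/andP: ht'.
Qed.

(* On an even level t the witness is a clique: level t is itself a clique, and
   every pair involving an odd level above t has an odd larger level. *)
Lemma witness_clique (t : 'I_k) : ~~ odd t -> is_clique adj (witness t).
Proof.
move=> hev; apply/forallP => u; apply/implyP => /witnessP hu.
apply/forallP => v; apply/implyP => /witnessP hv; apply/implyP => huv.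
rewrite cgraph_adjE huv /=; case: eqVneq => [e | ne].
  case: hu => [-> // | [eu _ _]]; case: hv => [hv | [ev _ _]]; first by rewrite e hv.
  by move: huv; rewrite eu ev e eqxx.
case: hu hv => [hu | [_ htu hou]] [hv | [_ htv hov]].
- by move: ne; rewrite hu hv eqxx.
- by rewrite hu (maxn_idPr (ltnW htv)).
- by rewrite hv (maxn_idPl (ltnW htu)).
- by case: (leqP (tag u) (tag v)) => h; rewrite ?(maxn_idPr h) ?(maxn_idPl (ltnW h)).
Qed.

Lemma card_witness (t : 'I_k) : #|witness t| = a t + #|odd_above k t|.
Proof.
have disj : level t :&: level_rep @: odd_above k t = set0.
  apply/setP => u; rewrite !inE; apply/negbTE/negP => /andP [/eqP hu /imsetP [t' ht' e]].
  by move: ht'; rewrite -hu e inE ltnn.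
rewrite cardsU disj cards0 subn0 card_level card_in_imset //.
by move=> t1 t2 _ _ /(congr1 (fun u : V => tag u)).
Qed.

End CliqueNumber.

Theorem theorem5p1 (k : nat) (a : nat -> nat) :
  2 <= k -> ~~ odd k -> (forall i, i < k -> 0 < a i) ->
  clique_number (@cgraph_adj k a) =
  \max_(i < k./2) (a i.*2 + (k./2 - i)).
Proof.
move=> hk hev ha.
have k_even : odd k.-1 by case: (k) hk hev => //= k' _; rewrite negbK.
apply/eqP; rewrite eqn_leq; apply/andP; split.
  by apply/bigmax_leqP => S; apply: clique_card_le.
have hk2 : 0 < #|'I_k./2| by rewrite card_ord; case: (k) hk => // [[]].
have [i ->] := eq_bigmax (fun i : 'I_k./2 => a i.*2 + (k./2 - i)) hk2.
have ht : i.*2 < k by move: (ltn_ord i); lia.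
have t_even : ~~ odd (Ordinal ht) by rewrite /= odd_double.
apply: leq_trans (leq_bigmax_cond _ (witness_clique _ _ k_even ha _ t_even)).
by rewrite card_witness card_odd_above /= uphalf_half odd_double doubleK.
Qed.
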